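(* Let $\Gamma$ be a finitely generated non-abelian free group and $\mathsf{G}=\prod_{i=1}^r\mathsf{G}_i$ a product of Lie groups $\mathsf{G}_1,\dots,\mathsf{G}_r$. If $\rho=(\rho_1,\dots,\rho_r):\Gamma\to\mathsf{G}$ is robustly faithful, then there exists $i\in\{1,\dots,r\}$ such that $\rho_i:\Gamma\to\mathsf{G}_i$ is robustly faithful.
   Context: Representation spaces carry the topology of pointwise convergence; a representation is robustly faithful if all representations in some neighborhood of it are injective. *)

From HB Require Import structures.
From mathcomp Require Import all_boot all_order all_algebra.
From mathcomp Require Import all_classical all_reals all_analysis.
From mathcomp Require Import Rstruct Rstruct_topology.
From Stdlib Require Import Rdefinitions.

Set Implicit Arguments.
Unset Strict Implicit.
Unset Printing Implicit Defensive.

Import Order.TTheory GRing.Theory Num.Theory.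
Import numFieldNormedType.Exports.
Local Open Scope classical_set_scope.
Local Open Scope ring_scope.

(* The free group F_k on k generators, as the set of reduced words.    *)
(* A letter (a, false) is the generator a, (a, true) its inverse.      *)

Definition letter (k : nat) := ('I_k * bool)%type.

Definition cancels (k : nat) (x y : letter k) : bool :=
  (x.1 == y.1) && (x.2 != y.2).

Definition reduced (k : nat) (w : seq (letter k)) : bool :=
  sorted (fun x y => ~~ cancels x y) w.

Definition reduce (k : nat) (w : seq (letter k)) : seq (letter k) :=
  foldr (fun x acc => if acc is y :: t then
                        (if cancels x y then t else x :: acc)
                      else [:: x]) [::] w.

Definition FG (k : nat) := {w : seq (letter k) | reduced w}.

Definition fg_one (k : nat) : FG k := @exist _ (fun w => reduced w) [::] isT.

(* group law of F_k : concatenate and freely reduce (reduce always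
   outputs a reduced word, so the default of insubd is never used) *)
Definition fg_mul (k : nat) (x y : FG k) : FG k :=
  insubd (fg_one k) (reduce (sval x ++ sval y)).

Definition iter_deriv (n m : nat) (vs : seq 'rV[R]_n)
  (f : 'rV[R]_n -> 'rV[R]_m) : 'rV[R]_n -> 'rV[R]_m :=
  foldr (fun v g => fun x => derive g x v) f vs.

Definition smooth_on (n m : nat) (U : set 'rV[R]_n)
  (f : 'rV[R]_n -> 'rV[R]_m) : Prop :=
  forall vs : seq 'rV[R]_n,
    (forall x v, U x -> derivable (iter_deriv vs f) x v) /\
    {within U, continuous (iter_deriv vs f)}.

Definition chart (M : topologicalType) (n : nat)
  (c : set M * (M -> 'rV[R]_n)) : Prop :=
  [/\ open c.1,
      (forall x y, c.1 x -> c.1 y -> c.2 x = c.2 y -> x = y),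
      {within c.1, continuous c.2} &
      (forall V, open V -> V `<=` c.1 -> open (c.2 @` V))].

Definition smooth_atlas (M : topologicalType) (n : nat)
  (A : set (set M * (M -> 'rV[R]_n))) : Prop :=
  [/\ (forall c, A c -> chart c),
      (forall x : M, exists c, A c /\ c.1 x) &
      (forall c d, A c -> A d ->
         exists h : 'rV[R]_n -> 'rV[R]_n,
           (forall x, c.1 x -> d.1 x -> h (c.2 x) = d.2 x) /\
           smooth_on (c.2 @` (c.1 `&` d.1)) h)].

Definition lie_structure (M : topologicalType) (mul : M -> M -> M)
  (inv : M -> M) : Prop :=
  exists (n : nat) (A : set (set M * (M -> 'rV[R]_n))),
  [/\ smooth_atlas A,
      (forall c d e, A c -> A d -> A e ->
         exists h : 'rV[R]_(n + n) -> 'rV[R]_n,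
           (forall x y, c.1 x -> d.1 y -> e.1 (mul x y) ->
              h (row_mx (c.2 x) (d.2 y)) = e.2 (mul x y)) /\
           smooth_on [set z | exists x y, [/\ c.1 x, d.1 y, e.1 (mul x y)
                                             & z = row_mx (c.2 x) (d.2 y)]] h) &
      (forall c d, A c -> A d ->
         exists h : 'rV[R]_n -> 'rV[R]_n,
           (forall x, c.1 x -> d.1 (inv x) -> h (c.2 x) = d.2 (inv x)) /\
           smooth_on [set z | exists x, [/\ c.1 x, d.1 (inv x) & z = c.2 x]] h)].

Record LieGroup := {
  lg_carrier :> topologicalType;
  lg_mul : lg_carrier -> lg_carrier -> lg_carrier;
  lg_inv : lg_carrier -> lg_carrier;
  lg_one : lg_carrier;
  lg_mulA : forall x y z, lg_mul x (lg_mul y z) = lg_mul (lg_mul x y) z;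
  lg_mul1g : forall x, lg_mul lg_one x = x;
  lg_mulVg : forall x, lg_mul (lg_inv x) x = lg_one;
  lg_hausdorff : hausdorff_space lg_carrier;
  lg_lie : lie_structure lg_mul lg_inv
}.

Definition ProdG (r : nat) (G : 'I_r -> LieGroup) : topologicalType :=
  prod_topology (fun i => lg_carrier (G i)).

Definition prod_mul (r : nat) (G : 'I_r -> LieGroup)
  (x y : ProdG G) : ProdG G :=
  fun i => lg_mul (x i) (y i).

(* Hom(F_k, G) carries the topology of pointwise convergence, i.e.     *)
(* the subspace topology of {ptws FG k -> G}.                          *)

Definition is_hom (k : nat) (T : Type) (mul : T -> T -> T) (f : FG k -> T) :=
  forall x y, f (fg_mul x y) = mul (f x) (f y).

Definition robustly_faithful (k : nat) (T : topologicalType)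
  (mul : T -> T -> T) (rho : FG k -> T) : Prop :=
  exists N : set {ptws FG k -> T},
    nbhs (rho : {ptws FG k -> T}) N /\
    forall sigma : FG k -> T, N sigma -> is_hom mul sigma -> injective sigma.

(* Suppose no coordinate rho_i is robustly faithful and fix a neighbourhood U
   of rho. We perturb rho inside U one coordinate at a time, maintaining a
   nontrivial z in the kernels of all coordinates changed so far. Since rho_i
   is not robustly faithful, near it there is a representation sigma_i with a
   nontrivial kernel element e; the commutator [x z x^-1, y e y^-1], for
   letters x, y chosen so that the word is reduced, is nontrivial and lies in
   the kernels of the old coordinates and of sigma_i. After the last
   coordinate we get a non-injective representation in U, so rho is not
   robustly faithful. *)

From mathcomp Require Import all_boot all_order all_algebra.
From mathcomp Require Import all_classical all_reals all_analysis.

Set Implicit Arguments.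
Unset Strict Implicit.
Unset Printing Implicit Defensive.

Local Open Scope classical_set_scope.

Section FreeReduction.
Variable k : nat.
Implicit Types (x y l : letter k) (u v w : seq (letter k)).

Definition reduce_step x (acc : seq (letter k)) : seq (letter k) :=
  if acc is y :: t then (if cancels x y then t else x :: acc) else [:: x].

Lemma reduce_cons x w : reduce (x :: w) = reduce_step x (reduce w).
Proof. by []. Qed.

Lemma reduce_cat u v : reduce (u ++ v) = foldr reduce_step (reduce v) u.
Proof. by rewrite /reduce foldr_cat. Qed.

Definition flip l : letter k := (l.1, ~~ l.2).

Lemma flipK : involutive flip.
Proof. by case=> a b; rewrite /flip /= negbK. Qed.

Lemma eq_flip2 x y : (flip x == flip y) = (x == y).
Proof. exact/inj_eq/inv_inj/flipK. Qed.

Lemma cancelsE x y : cancels x y = (y == flip x).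
Proof.
case: x y => a b [c d]; rewrite /cancels /flip /= xpair_eqE eq_sym.
by case: b; case: d.
Qed.

Lemma eq_flipC x y : (x == flip y) = (y == flip x).
Proof. by rewrite -(can2_eq flipK flipK) eq_sym. Qed.

Lemma reduced_cons x w :
  reduced (x :: w) = (if w is y :: _ then ~~ cancels x y else true) && reduced w.
Proof. by case: w. Qed.

Lemma reduce_reduced w : reduced (reduce w).
Proof.
elim: w => // x w; rewrite reduce_cons.
case: (reduce w) => [|y t] // IH; rewrite /reduce_step.
case: ifP => c; first by move: IH; rewrite reduced_cons => /andP[].
by rewrite reduced_cons c IH.
Qed.

Lemma reduce_id w : reduced w -> reduce w = w.
Proof.
elim: w => // x w IH; rewrite reduced_cons reduce_cons => /andP[h /IH ->].
by case: w h {IH} => // y t /negbTE h; rewrite /reduce_step h.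
Qed.

Lemma reduce_stepK l w :
  reduced w -> reduce_step l (reduce_step (flip l) w) = w.
Proof.
case: w => [|y t]; first by rewrite /= cancelsE eqxx.
rewrite /reduce_step; have [->|ne] := eqVneq y l => H.
  rewrite cancelsE flipK eqxx.
  by case: t H => // z t; rewrite reduced_cons => /andP[/negbTE h _] /=; rewrite h.
by rewrite cancelsE flipK (negbTE ne) /= cancelsE eqxx.
Qed.

Definition winv w := rev (map flip w).

Lemma winv_cons l w : winv (l :: w) = rcons (winv w) (flip l).
Proof. by rewrite /winv /= rev_cons. Qed.

Lemma winv_rcons w l : winv (rcons w l) = flip l :: winv w.
Proof. by rewrite /winv map_rcons rev_rcons. Qed.

Lemma winv_eq0 w : (winv w == [::]) = (w == [::]).
Proof. by rewrite -!size_eq0 size_rev size_map. Qed.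

Lemma head_winv d w : w != [::] -> head d (winv w) = flip (last d w).
Proof. by case/lastP: w => // s l _; rewrite winv_rcons last_rcons. Qed.

Lemma last_winv d w : w != [::] -> last d (winv w) = flip (head d w).
Proof. by case: w => // l s _; rewrite winv_cons last_rcons. Qed.

Lemma reduce_cat_winv u v : reduce (u ++ winv u ++ v) = reduce v.
Proof.
elim: u v => // l u IH v.
rewrite winv_cons -cats1 -!catA cat_cons reduce_cons IH cat1s reduce_cons.
by rewrite reduce_stepK // reduce_reduced.
Qed.

Lemma reduced_winv w : reduced w -> reduced (winv w).
Proof.
rewrite /reduced /winv rev_sorted sorted_map.
by apply: sub_sorted => x y /=; rewrite !cancelsE flipK eq_sym.
Qed.

(* The default letter [d] is irrelevant since both words are nonempty. *)
Lemma reduced_cat d u v : reduced u -> reduced v -> u != [::] -> v != [::] ->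
  ~~ cancels (last d u) (head d v) -> reduced (u ++ v).
Proof.
case: u => // l u; case: v => // q v; rewrite /reduced /= cat_path.
by move=> -> /= -> _ _ ->.
Qed.

Lemma reduced_cat3 d u v w :
  reduced u -> reduced (v ++ w) -> u != [::] -> v != [::] ->
  ~~ cancels (last d u) (head d v) -> reduced (u ++ v ++ w).
Proof. by case: v => // q v hu hvw nu _; apply: reduced_cat hu hvw nu _. Qed.

Lemma exists_letter_notin (F : seq (letter k)) :
  (2 <= k)%N -> (size F <= 3)%N -> exists l, l \notin F.
Proof.
move=> hk hF; pose i0 := Ordinal (ltnW hk); pose i1 := Ordinal hk.
pose L := [:: (i0, false); (i0, true); (i1, false); (i1, true)].
have /allPn [l _ lF] : ~~ all (mem F) L.
  apply/negP => /allP LF.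
  by have := uniq_leq_size (isT : uniq L) LF => /leq_trans/(_ hF).
by exists l.
Qed.

End FreeReduction.

Section LieGroupLaws.
Variable G : LieGroup.
Local Notation "x * y" := (lg_mul x y).
Local Notation "1" := (lg_one G).
Implicit Types x y z : G.

Lemma lg_mulgV x : x * lg_inv x = 1.
Proof.
set y := lg_inv x.
rewrite -(@lg_mul1g G (x * y)) -(@lg_mulVg G y) -lg_mulA (lg_mulA y x y).
by rewrite (@lg_mulVg G x) lg_mul1g.
Qed.

Lemma lg_mulg1 x : x * 1 = x.
Proof. by rewrite -(lg_mulVg x) lg_mulA lg_mulgV lg_mul1g. Qed.

Lemma lg_mulKg x y z : x * y = 1 -> x * (y * z) = z.
Proof. by move=> h; rewrite lg_mulA h lg_mul1g. Qed.

Lemma lg_mul_eq1C x y : x * y = 1 -> y * x = 1.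
Proof.
move=> h; have -> : y = lg_inv x by rewrite -[y](lg_mulKg _ (lg_mulVg x)) h lg_mulg1.
exact: lg_mulVg.
Qed.

(* The commutator [x a x^-1, y b y^-1], written with the inverses as
   separate elements as it arises from evaluating a word letter by letter. *)
Lemma lg_commutator_conj_eq1 x x' a a' y y' b b' :
  x' * x = 1 -> a' * a = 1 -> y' * y = 1 -> b' * b = 1 -> a = 1 \/ b = 1 ->
  x * (a * (x' * (y * (b * (y' * (x * (a' * (x' * (y * (b' * (y' * 1))))))))))) = 1.
Proof.
move=> /lg_mul_eq1C xx' a'a /lg_mul_eq1C yy' b'b [a1|b1].
  have a'1 : a' = 1 by rewrite a1 lg_mulg1 in a'a.
  rewrite a1 a'1 !lg_mul1g !(lg_mulKg _ xx').
  rewrite (lg_mulKg _ (lg_mul_eq1C yy')) (lg_mulKg _ (lg_mul_eq1C b'b)).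
  exact: lg_mulKg.
have b'1 : b' = 1 by rewrite b1 lg_mulg1 in b'b.
rewrite b1 b'1 !lg_mul1g !(lg_mulKg _ yy').
rewrite (lg_mulKg _ (lg_mul_eq1C xx')) (lg_mulKg _ (lg_mul_eq1C a'a)).
exact: lg_mulKg.
Qed.

Lemma lg_idem_eq1 x : x * x = x -> x = 1.
Proof. by move=> h; rewrite -[x in LHS](lg_mulKg _ (lg_mulVg x)) h lg_mulVg. Qed.

End LieGroupLaws.

Section FreeGroupHom.
Variable k : nat.
Implicit Types (l : letter k) (w : seq (letter k)) (p q : FG k).

Definition mkFG w (h : reduced w) : FG k := exist _ w h.

Definition fg_letter l : FG k := mkFG (isT : reduced [:: l]).

Definition fg_inv p : FG k := mkFG (reduced_winv (svalP p)).

Lemma val_fg_mul p q : sval (fg_mul p q) = reduce (sval p ++ sval q).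
Proof. by rewrite /fg_mul insubdK // unfold_in; apply: reduce_reduced. Qed.

Lemma fg_mul1g p : fg_mul (fg_one k) p = p.
Proof. by apply: val_inj; rewrite /= val_fg_mul /= reduce_id //; case: p. Qed.

Lemma fg_mulVletter l : fg_mul (fg_letter (flip l)) (fg_letter l) = fg_one k.
Proof. by apply: val_inj; rewrite /= val_fg_mul /= cancelsE flipK eqxx. Qed.

Lemma fg_mulV_neq1 p q : p <> q -> sval (fg_mul (fg_inv q) p) != [::].
Proof.
case: p q => [u hu] [v hv] npq; apply: contra_notN npq.
rewrite val_fg_mul /= => /eqP h; apply: val_inj => /=.
have := reduce_cat_winv v u.
by rewrite reduce_cat h -/(reduce v) !reduce_id.
Qed.

Variable G : LieGroup.
Variable tau : FG k -> G.
Hypothesis htau : is_hom (@lg_mul G) tau.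

Lemma hom_one : tau (fg_one k) = lg_one G.
Proof. by apply: lg_idem_eq1; rewrite -htau fg_mul1g. Qed.

Definition eval_word w : G :=
  foldr (fun l acc => lg_mul (tau (fg_letter l)) acc) (lg_one G) w.

Lemma eval_word_cat u v : eval_word (u ++ v) = lg_mul (eval_word u) (eval_word v).
Proof. by elim: u => [|l u IH] /=; rewrite ?lg_mul1g // IH lg_mulA. Qed.

Lemma hom_letterV l :
  lg_mul (tau (fg_letter (flip l))) (tau (fg_letter l)) = lg_one G.
Proof. by rewrite -htau fg_mulVletter hom_one. Qed.

Lemma eval_wordV w : lg_mul (eval_word (winv w)) (eval_word w) = lg_one G.
Proof.
elim: w => [|l w IH] /=; first exact: lg_mul1g.
rewrite winv_cons -cats1 eval_word_cat /= lg_mulg1 -lg_mulA.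
by rewrite [X in lg_mul _ X]lg_mulA hom_letterV lg_mul1g.
Qed.

Lemma hom_mkFG w (h : reduced w) : tau (mkFG h) = eval_word w.
Proof.
elim: w h => [|l w IH] h.
  by rewrite /= -hom_one; congr tau; apply: val_inj.
have hw : reduced w by move: h; rewrite reduced_cons => /andP[].
rewrite /= -(IH hw) -htau; congr tau; apply: val_inj.
by rewrite /= val_fg_mul -[_ ++ _]/(l :: w) reduce_id.
Qed.

Lemma hom_eval_word p : tau p = eval_word (sval p).
Proof. by case: p => w h; apply: hom_mkFG. Qed.

Lemma hom_not_injective : ~ injective tau ->
  exists2 e : FG k, sval e != [::] & tau e = lg_one G.
Proof.
move=> ninj; have [p [q [tpq npq]]] : exists p q, tau p = tau q /\ p <> q.
  apply: contrapT => H; apply: ninj => p q tpq.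
  by apply: contrapT => npq; apply: H; exists p, q.
exists (fg_mul (fg_inv q) p); first exact: fg_mulV_neq1.
by rewrite htau tpq !hom_eval_word eval_wordV.
Qed.

End FreeGroupHom.

(* The word [x a x^-1, y b y^-1] lies in the normal closures of both [a] and
   [b]; the letters [x], [y] are chosen so that it is already reduced, hence
   nontrivial. *)
Lemma common_kernel_element k (a b : FG k) : (2 <= k)%N ->
  sval a != [::] -> sval b != [::] ->
  exists2 c : FG k, sval c != [::] &
    forall (G : LieGroup) (tau : FG k -> G), is_hom (@lg_mul G) tau ->
      tau a = lg_one G \/ tau b = lg_one G -> tau c = lg_one G.
Proof.
case: a b => [u hu] [v hv] hk /= nu nv.
pose d : letter k := (Ordinal (ltnW hk), false).
have [x] := exists_letter_notin (F := [:: flip (head d u); last d u]) hk isT.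
have [y] := exists_letter_notin (F := [:: flip (head d v); last d v; x]) hk isT.
rewrite !inE !negb_or => /and3P[yv1 yv2 yx] /andP[xu1 xu2].
rewrite eq_flipC in xu1; rewrite eq_flipC in yv1.
pose cw := [:: x] ++ u ++ [:: flip x] ++ [:: y] ++ v ++ [:: flip y] ++
  [:: x] ++ winv u ++ [:: flip x] ++ [:: y] ++ winv v ++ [:: flip y] ++ [::].
(* The trailing [[::]] lets every seam be handled by [reduced_cat3]. *)
have hcw : reduced cw.
  rewrite /cw; do 11 (apply: (reduced_cat3 (d := d));
    [by [|apply: reduced_winv] | | by rewrite ?winv_eq0 | by rewrite ?winv_eq0 |
     rewrite cancelsE /= ?head_winv ?last_winv // ?flipK ?eq_flip2;
     first [done | by rewrite eq_sym]]).
  by [].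
exists (mkFG hcw) => // G tau htau hab.
rewrite (hom_mkFG htau) /cw /=; do 4 rewrite eval_word_cat /=.
rewrite !(hom_mkFG htau) in hab.
by apply: lg_commutator_conj_eq1; rewrite ?hom_letterV ?eval_wordV.
Qed.

Lemma continuous_into_prod (X : topologicalType) (I : Type)
    (K : I -> topologicalType) (h : X -> prod_topology K) :
  (forall i, continuous (fun x => h x i)) -> continuous h.
Proof.
move=> hc x; apply/cvg_sup => i U.
have /= -> := @nbhsE (initial_topology (fun f : (forall i, K i) => f i)) (h x).
case=> B [[C oC <- ?]] /filterS; apply.
by apply: (hc i x); apply: open_nbhs_nbhs.
Qed.

Lemma continuous_dfwith_ptws (T : eqType) (I : eqType) (K : I -> topologicalType)
    (t : T -> prod_topology K) (i : I) :
  continuous (fun s : {ptws T -> K i} =>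
    (fun w => dfwith (t w) i (s w)) : {ptws T -> prod_topology K}).
Proof.
apply: continuous_into_prod => w s.
apply: (@continuous_comp _ _ _ (fun s : {ptws T -> K i} => s w)).
  exact: (@proj_continuous _ (fun _ : T => K i) w).
exact: dfwith_continuous.
Qed.

Lemma not_robustly_faithful_near k (T : topologicalType) (mul : T -> T -> T)
    (rho : FG k -> T) (M : set {ptws FG k -> T}) :
  ~ robustly_faithful mul rho -> nbhs (rho : {ptws FG k -> T}) M ->
  exists sigma : FG k -> T, [/\ M sigma, is_hom mul sigma & ~ injective sigma].
Proof.
move=> nrf hM; apply: contrapT => H; apply: nrf; exists M; split => // s Ms hs.
by apply: contrapT => ni; apply: H; exists s.
Qed.

Section ProductRepresentations.
Variables (k r : nat) (G : 'I_r -> LieGroup).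
Implicit Types (t : FG k -> ProdG G) (i j : 'I_r).

Lemma is_hom_coord t i :
  is_hom (@prod_mul r G) t -> is_hom (@lg_mul (G i)) (fun w => t w i).
Proof. by move=> ht x y; rewrite ht. Qed.

Lemma is_hom_dfwith t i (s : FG k -> G i) :
  is_hom (@prod_mul r G) t -> is_hom (@lg_mul (G i)) s ->
  is_hom (@prod_mul r G) (fun w => dfwith (t w) i (s w)).
Proof.
move=> ht hs x y; apply: functional_extensionality_dep => j; rewrite /prod_mul.
by have [<-|nij] := eqVneq i j; rewrite ?dfwithin ?hs // !dfwithout // ht.
Qed.

Lemma perturb_coordinate (U : set {ptws FG k -> ProdG G}) t i (z : FG k) :
  (2 <= k)%N -> open U -> U t -> is_hom (@prod_mul r G) t ->
  ~ robustly_faithful (@lg_mul (G i)) (fun w => t w i) -> sval z != [::] ->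
  exists t', [/\ U t', is_hom (@prod_mul r G) t',
    (forall j w, i != j -> t' w j = t w j) &
    exists2 c : FG k, sval c != [::] &
      forall j, j = i \/ t z j = lg_one (G j) -> t' c j = lg_one (G j)].
Proof.
move=> hk oU Ut ht nrf nz.
pose upd (s : {ptws FG k -> G i}) : {ptws FG k -> ProdG G} :=
  fun w => dfwith (t w) i (s w).
have updt : upd (fun w => t w i) = t.
  apply: functional_extensionality_dep => w.
  by apply: functional_extensionality_dep => j; rewrite /upd; case: dfwithP.
have nbU : nbhs ((fun w => t w i) : {ptws FG k -> G i}) (upd @^-1` U).
  apply: (@continuous_dfwith_ptws _ _ (fun j => lg_carrier (G j)) t i).
  by rewrite -[X in nbhs X _]/(upd (t^~ i)) updt; apply: open_nbhs_nbhs.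
have [s [Us hs nis]] := not_robustly_faithful_near nrf nbU.
have [e ne se] := hom_not_injective hs nis.
have [c nc hc] := common_kernel_element hk nz ne.
exists (upd s); split => //.
- exact: is_hom_dfwith.
- by move=> j w nij; rewrite /upd dfwithout.
exists c => // j [->|tzj]; rewrite /upd.
  by rewrite dfwithin; apply: hc => //; right.
have [<-|nij] := eqVneq i j; first by rewrite dfwithin; apply: hc => //; right.
by rewrite dfwithout //; apply: hc (is_hom_coord j ht) _; left.
Qed.

Lemma kill_first_coordinates (U : set {ptws FG k -> ProdG G}) rho :
  (2 <= k)%N -> open U -> U rho -> is_hom (@prod_mul r G) rho ->
  (forall i, ~ robustly_faithful (@lg_mul (G i)) (fun w => rho w i)) ->
  forall n, (n <= r)%N ->
  exists t, [/\ U t, is_hom (@prod_mul r G) t,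
    (forall i w, (n <= i)%N -> t w i = rho w i) &
    exists2 z : FG k, sval z != [::] &
      forall i, (i < n)%N -> t z i = lg_one (G i)].
Proof.
move=> hk oU Urho hrho nrf; elim=> [_|n IH ltnr].
  by exists rho; split => //; exists (fg_letter (Ordinal (ltnW hk), false)).
have [t [Ut ht trho [z nz tz]]] := IH (ltnW ltnr).
pose i := Ordinal ltnr.
have nrfi : ~ robustly_faithful (@lg_mul (G i)) (fun w => t w i).
  suff -> : (fun w => t w i) = (fun w => rho w i) by [].
  by apply: funext => w; apply: trho.
have [t' [Ut' ht' t't [c nc t'c]]] := perturb_coordinate hk oU Ut ht nrfi nz.
exists t'; split => //.
  move=> i' w lei'; rewrite t't; first exact/trho/ltnW.
  by apply: contraTneq lei' => <-; rewrite ltnn.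
exists c => // i'; rewrite ltnS leq_eqVlt => /orP[/eqP ei'|lti'].
  by apply: t'c; left; apply: val_inj.
by apply: t'c; right; apply: tz.
Qed.

End ProductRepresentations.

Theorem mainTheorem7 (k : nat) (hk : (2 <= k)%N) (r : nat)
  (G : 'I_r -> LieGroup) (rho : FG k -> ProdG G)
  (hrho : is_hom (@prod_mul r G) rho) :
  robustly_faithful (@prod_mul r G) rho ->
  exists i : 'I_r, robustly_faithful (@lg_mul (G i)) (fun w => rho w i).
Proof.
case=> N [hN hinj]; apply: contrapT => hno.
have nrf i : ~ robustly_faithful (@lg_mul (G i)) (fun w => rho w i).
  by move=> rf; apply: hno; exists i.
move: hN; rewrite nbhsE => -[U [oU Urho] UN].
have [t [Ut ht _ [z nz tz]]] := kill_first_coordinates hk oU Urho hrho nrf (leqnn r).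
have tz1 : t z = t (fg_one k).
  apply: functional_extensionality_dep => i.
  by rewrite tz // (hom_one (is_hom_coord i ht)).
by move: nz; rewrite (hinj t (UN _ Ut) ht _ _ tz1).
Qed.
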